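(* Let $\alpha,\beta,\gamma\in\mathbb{Z}[i]$ satisfy $\alpha^2+i\beta^2+(1+i)\gamma^2=0$, $\alpha\beta\gamma\neq0$, $\gcd(\alpha,\beta,\gamma)\in U$, and suppose $\alpha=i^m\alpha'$, $\beta=i^n\beta'$, $\gamma=i^l\gamma'$ with $m,n,l\in\{0,1\}$ and $\alpha',\beta',\gamma'\in O^I$. Then $m+l\equiv n+l\equiv1\pmod 2$.
   Context: $\mathbb{Z}[i]$ is the ring of Gaussian integers, $U=\{1,-1,i,-i\}$ its unit group; $R(\alpha),I(\alpha)$ are real and imaginary parts. $O=\{\alpha: R(\alpha)+I(\alpha)\equiv1\pmod 2\}$, $O^I=\{\alpha\in O: R(\alpha)\equiv 1\pmod 4\}$. *)

(* Gaussian integers Z[i] modelled as pairs of integers (re, im). *)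
From Stdlib Require Import ZArith.
Open Scope Z_scope.

Record gi := GI { R : Z; I : Z }.

Definition gadd (a b : gi) : gi := GI (R a + R b) (I a + I b).
Definition gmul (a b : gi) : gi :=
  GI (R a * R b - I a * I b) (R a * I b + I a * R b).
Definition g0 : gi := GI 0 0.
Definition g1 : gi := GI 1 0.
Definition gi_i : gi := GI 0 1.

Fixpoint ipow (k : nat) : gi :=
  match k with O => g1 | S k' => gmul gi_i (ipow k') end.

Definition is_unit (u : gi) : Prop :=
  u = GI 1 0 \/ u = GI (-1) 0 \/ u = GI 0 1 \/ u = GI 0 (-1).

Definition gdvd (d a : gi) : Prop := exists k, a = gmul d k.

Definition gcd3_unit (a b c : gi) : Prop :=
  forall d, gdvd d a -> gdvd d b -> gdvd d c -> is_unit d.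

Definition in_O (a : gi) : Prop := Z.odd (R a + I a) = true.
Definition in_OI (a : gi) : Prop := in_O a /\ R a mod 4 = 1.

(** An element of [O^I] has the form [1 + 2z], so its square [1 + 4z + 4z^2] is
    congruent to [1] modulo [4], and [(i^m x)^2 = (-1)^m x^2] is congruent to
    [(-1)^m]. Reducing the equation modulo [4], the real part gives
    [(-1)^m + (-1)^l = 0 (mod 4)] and the imaginary part
    [(-1)^n + (-1)^l = 0 (mod 4)], which forces [m + l] and [n + l] to be odd. *)

From Stdlib Require Import ZArith Arith Lia.

Definition nsign (m : nat) : Z := if Nat.even m then 1 else -1.

Lemma nsign_succ (m : nat) : nsign (S m) = - nsign m.
Proof.
  unfold nsign; rewrite Nat.even_succ, <- Nat.negb_even.
  now destruct (Nat.even m).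
Qed.

Lemma nsign_add_divide_odd (a b : nat) :
  (4 | nsign a + nsign b) -> Nat.odd (a + b) = true.
Proof.
  unfold nsign; rewrite Nat.odd_add, <- !Nat.negb_even; intros [k Hk].
  destruct (Nat.even a), (Nat.even b); cbn in *; auto; lia.
Qed.

Lemma sqr_ipow_mul (m : nat) (x : gi) :
  gmul (gmul (ipow m) x) (gmul (ipow m) x)
  = GI (nsign m * R (gmul x x)) (nsign m * I (gmul x x)).
Proof.
  induction m as [|m IHm]; cbn [ipow].
  - destruct x as [a b]; cbv [gmul g1 R I nsign Nat.even].
    f_equal; ring.
  - rewrite nsign_succ.
    destruct (ipow m) as [p q], x as [a b].
    cbv [gmul gi_i R I] in *; injection IHm as IHR IHI.
    f_equal; nia.
Qed.

Lemma in_OI_sqr (x : gi) :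
  in_OI x -> exists u v, gmul x x = GI (1 + 4 * u) (4 * v).
Proof.
  destruct x as [a b]; unfold in_OI, in_O; cbn [R I]; intros [Hodd Hmod].
  assert (Ha : a = 4 * (a / 4) + 1) by (rewrite <- Hmod; apply Z.div_mod; lia).
  assert (Hb : Z.even b = true).
  { rewrite Ha, Z.odd_add, Z.odd_add, Z.odd_mul in Hodd; cbn in Hodd.
    rewrite <- Z.negb_odd; now destruct (Z.odd b). }
  apply Z.even_spec in Hb as [j Hj].
  set (k := a / 4) in Ha; rewrite Ha.
  exists (4 * k ^ 2 + 2 * k - j ^ 2), (4 * k * j + j).
  subst b; cbv [gmul R I]; f_equal; ring.
Qed.

Theorem lemma4p17 (alpha beta gamma alpha' beta' gamma' : gi) (m n l : nat) :
  gadd (gadd (gmul alpha alpha) (gmul gi_i (gmul beta beta)))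
       (gmul (GI 1 1) (gmul gamma gamma)) = g0 ->
  alpha <> g0 -> beta <> g0 -> gamma <> g0 ->
  gcd3_unit alpha beta gamma ->
  (m <= 1)%nat -> (n <= 1)%nat -> (l <= 1)%nat ->
  alpha = gmul (ipow m) alpha' ->
  beta = gmul (ipow n) beta' ->
  gamma = gmul (ipow l) gamma' ->
  in_OI alpha' -> in_OI beta' -> in_OI gamma' ->
  Nat.odd (m + l) = true /\ Nat.odd (n + l) = true.
Proof.
  intros E _ _ _ _ _ _ _ -> -> -> Oa Ob Oc.
  rewrite !sqr_ipow_mul in E.
  destruct (in_OI_sqr _ Oa) as (ua & va & Sa).
  destruct (in_OI_sqr _ Ob) as (ub & vb & Sb).
  destruct (in_OI_sqr _ Oc) as (uc & vc & Sc).
  rewrite Sa, Sb, Sc in E.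
  pose proof (f_equal R E) as ER; pose proof (f_equal I E) as EI.
  cbv [gadd gmul gi_i g0 R I] in ER, EI.
  split; apply nsign_add_divide_odd.
  - exists (nsign n * vb - nsign m * ua - nsign l * uc + nsign l * vc); lia.
  - exists (- nsign m * va - nsign n * ub - nsign l * uc - nsign l * vc); lia.
Qed.
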